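(* Let $c$ and $d$ be two primitive combinatorial closed curves that are not freely homotopic. Then the sequence of double points of a double path of $(c,d)$ contains no double point more than once. Moreover, every double path of $(c,d)$ has length less than $|c|+|d|-1$.
   Context: A combinatorial closed curve $c$ of length $|c|$ has vertices $c(i)$ and arcs $c[i,i+1]$, $i\in\mathbb{Z}/|c|\mathbb{Z}$. It is primitive if its free homotopy class is not a proper power of another class. A forward index path of length $\ell$ of $c$ is $(i,i+1,\dots,i+\ell)$ (indices mod $|c|$), with image path $(c[i,i+1],\dots,c[i+\ell-1,i+\ell])$. A double point of $(c,d)$ is a pair $(i,j)\in\mathbb{Z}/|c|\mathbb{Z}\times\mathbb{Z}/|d|\mathbb{Z}$ with $c(i)=d(j)$. A double path of $(c,d)$ of length $\ell$ is a pair of forward index paths $((i,\dots,i+\ell)_c,(j,\dots,j+\ell)_d)$ with identical image paths; its sequence of double points is $(i+k,j+k)$, $k=0,\dots,\ell$. *)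

From mathcomp Require Import all_boot.
From Stdlib Require Import Relation_Operators.
Set Implicit Arguments. Unset Strict Implicit. Unset Printing Implicit Defensive.

Section Walks.
Variables (V D : Type) (dtail dhead : D -> V).

Fixpoint walkb (u : V) (s : seq D) : Prop :=
  match s with
  | [::] => True
  | a :: s' => dtail a = u /\ walkb (dhead a) s'
  end.

Definition walk_end (u : V) (s : seq D) : V := last u (map dhead s).

Definition closed_walk (u : V) (s : seq D) : Prop :=
  walkb u s /\ walk_end u s = u.

Definition face_ok (f : seq D) : Prop :=
  match f with
  | a :: _ => closed_walk (dtail a) f
  | [::] => False
  end.
End Walks.

(* A finite graph whose arcs are represented by pairs of opposite darts
   (drev: fixed-point free involution), together with the boundary walks of
   its faces; every dart occurs exactly once on the face boundaries. *)
Record comb_surface := CombSurface {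
  vertex : finType;
  dart : finType;
  dtail : dart -> vertex;
  dhead : dart -> vertex;
  drev : dart -> dart;
  drevK : involutive drev;
  drev_neq : forall a, drev a != a;
  drev_tail : forall a, dtail (drev a) = dhead a;
  faces : seq (seq dart);
  faces_ok : forall f, f \in faces -> face_ok dtail dhead f;
  faces_partition : forall a, count_mem a (flatten faces) = 1%N
}.

Section Homotopy.
Variable S : comb_surface.

(* a (possibly empty) closed walk with its base vertex *)
Definition cwalk := (vertex S * seq (dart S))%type.
Definition is_cwalk (w : cwalk) : Prop := closed_walk (@dtail S) (@dhead S) w.1 w.2.

Inductive hstep : cwalk -> cwalk -> Prop :=
  (* change of base point along the curve *)
  | hs_rot (v : vertex S) (a : dart S) (s : seq (dart S)) :
      hstep (v, a :: s) (dhead a, rcons s a)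
  | hs_spur (v : vertex S) (s1 s2 : seq (dart S)) (a : dart S) :
      hstep (v, s1 ++ s2) (v, s1 ++ a :: drev a :: s2)
  | hs_face (v : vertex S) (s1 s2 : seq (dart S)) (f : seq (dart S)) (k : nat) :
      f \in faces S -> hstep (v, s1 ++ s2) (v, s1 ++ rot k f ++ s2).

Definition hstep_ok (w1 w2 : cwalk) : Prop :=
  [/\ is_cwalk w1, is_cwalk w2 & hstep w1 w2].

Definition whomotopic (w1 w2 : cwalk) : Prop :=
  clos_refl_sym_trans cwalk hstep_ok w1 w2.

(* c(i) = dtail of the i-th dart, arc c[i,i+1] = i-th dart, indices mod |c| *)
Record curve := Curve {
  c0 : dart S;
  crest : seq (dart S);
  cclosed : face_ok (@dtail S) (@dhead S) (c0 :: crest)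
}.

Definition cdarts (c : curve) : seq (dart S) := c0 c :: crest c.

Definition clen (c : curve) : nat := size (cdarts c).

Definition carc (c : curve) (i : nat) : dart S := nth (c0 c) (cdarts c) (i %% clen c).

Definition cvert (c : curve) (i : nat) : vertex S := dtail (carc c i).

Definition cwalk_of (c : curve) : cwalk := (cvert c 0, cdarts c).

Definition freely_homotopic (c d : curve) : Prop := whomotopic (cwalk_of c) (cwalk_of d).

Definition wpow (w : cwalk) (k : nat) : cwalk := (w.1, flatten (nseq k w.2)).

Definition primitive (c : curve) : Prop :=
  ~ exists (w : cwalk) (k : nat), [/\ is_cwalk w, (2 <= k)%N & whomotopic (cwalk_of c) (wpow w k)].

Definition double_path (c d : curve) (i j l : nat) : Prop :=
  [/\ (i < clen c)%N, (j < clen d)%N,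
      (forall k, (k <= l)%N -> cvert c (i + k) = cvert d (j + k)) &
      (forall k, (k < l)%N -> carc c (i + k) = carc d (j + k))].

Definition dpoint (c d : curve) (i j k : nat) : nat * nat :=
  ((i + k) %% clen c, (j + k) %% clen d)%N.

End Homotopy.

From mathcomp Require Import all_boot zify.
From Stdlib Require Import Relation_Operators.
Set Implicit Arguments. Unset Strict Implicit.

(* The arcs read along a double path form a word with period |c| (from c) and
   period |d| (from d). If the path had length at least |c| + |d| - gcd(|c|,|d|),
   the Fine-Wilf theorem would give it period g = gcd(|c|,|d|); reading c and d
   from the start of the path then both become powers of the same closed walk of
   length g, so primitivity forces |c| = |d| = g, and c, d become rotations of one
   closed walk, hence freely homotopic. A double point repeated at steps k1 < k2 forces
   k2 - k1 to be a multiple of lcm(|c|,|d|) >= |c| + |d| - g, so it cannot occur on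
   a shorter double path either. *)

Section FineWilf.
Variable T : Type.
Implicit Type f : nat -> T.

Definition periodic_on f (p L : nat) := forall x, x + p < L -> f x = f (x + p).

Lemma periodic_on_mod f p L : 0 < p -> periodic_on f p L ->
  forall x, x < L -> f x = f (x %% p).
Proof.
move=> p_gt0 fp x; elim/ltn_ind: x => x IH xL.
case: (ltnP x p) => [ltxp | lepx]; first by rewrite modn_small.
have def_x : x = (x - p) + p by rewrite subnK.
have -> : x %% p = (x - p) %% p by rewrite -(modnDr (x - p)) -def_x.
by rewrite {1}def_x -fp -?def_x //; apply: IH; lia.
Qed.

Theorem fine_wilf f p q L : 0 < p -> 0 < q ->
  periodic_on f p L -> periodic_on f q L -> p + q - gcdn p q <= L ->
  forall x, x < L -> f x = f (x %% gcdn p q).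
Proof.
move En : (p + q) => n; elim/ltn_ind: n => n IH in f p q L En *.
move=> p_gt0 q_gt0 fp fq leL.
wlog lepq : p q En p_gt0 q_gt0 fp fq leL / p <= q.
  move=> W; case: (leqP p q) => [|/ltnW]; first exact: W.
  by rewrite gcdnC; apply: W; rewrite // 1?addnC // gcdnC.
move: lepq; rewrite leq_eqVlt => /orP[/eqP <- | ltpq].
  by rewrite gcdnn; apply: periodic_on_mod.
have gcd_sub : gcdn p (q - p) = gcdn p q by rewrite -{2}(subnK (ltnW ltpq)) gcdnDr.
have g_le_qp : gcdn p q <= q - p.
  by rewrite -gcd_sub dvdn_leq ?dvdn_gcdr ?subn_gt0.
have g_le_p : gcdn p q <= p by rewrite dvdn_leq ?dvdn_gcdl.
(* the prefix of length L - p has periods p and q - p *)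
have short : forall y, y < L - p -> f y = f (y %% gcdn p q).
  rewrite -gcd_sub; apply: (IH q) => //; try lia.
  - by move=> x lt; apply: fp; lia.
  - move=> x lt; rewrite fq; last by lia.
    by rewrite -{1}(subnK (ltnW ltpq)) addnA -fp //; lia.
move=> x xL; rewrite (periodic_on_mod p_gt0 fp xL) short; last first.
  by have := ltn_pmod x p_gt0; lia.
by rewrite modn_dvdm ?dvdn_gcdl.
Qed.

End FineWilf.

Lemma sub_gcdn_leq_lcmn p q : 0 < p -> 0 < q -> p + q - gcdn p q <= lcmn p q.
Proof.
move=> p_gt0 q_gt0.
have g_gt0 : 0 < gcdn p q by rewrite gcdn_gt0 p_gt0.
have g_le_q : gcdn p q <= q by rewrite dvdn_leq ?dvdn_gcdr.
have [a def_p] : exists a, p = a * gcdn p q.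
  by exists (p %/ gcdn p q); rewrite divnK ?dvdn_gcdl.
have -> : lcmn p q = a * q by rewrite /lcmn {1}def_p mulnAC mulnK.
have a_gt0 : 0 < a by move: p_gt0; rewrite def_p muln_gt0 => /andP[].
nia.
Qed.

Section MkseqFacts.
Variable T : Type.

Lemma mkseqD (f : nat -> T) m n :
  mkseq f (m + n) = mkseq f m ++ mkseq (fun k => f (m + k)) n.
Proof. by rewrite /mkseq iotaD map_cat add0n -{2}[m]addn0 iotaDl -map_comp. Qed.

Lemma mkseq_periodic (f : nat -> T) m a : (forall x, f (x + m) = f x) ->
  mkseq f (a * m) = flatten (nseq a (mkseq f m)).
Proof.
move=> fm; elim: a => [//|a IH].
rewrite mulSn mkseqD /= -IH; congr (_ ++ _); apply: eq_mkseq => k.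
by rewrite addnC fm.
Qed.

End MkseqFacts.

Section Walks.
Variables (V D : Type) (dt dh : D -> V).

Lemma walkb_cat u s t : walkb dt dh u (s ++ t) <->
  walkb dt dh u s /\ walkb dt dh (walk_end dh u s) t.
Proof.
elim: s u => [|a s IH] u /=; first by tauto.
by have := IH (dh a); rewrite /walk_end /=; tauto.
Qed.

Lemma walkb_mkseq (F : nat -> D) n : (forall k, dh (F k) = dt (F k.+1)) ->
  walkb dt dh (dt (F 0)) (mkseq F n) /\ walk_end dh (dt (F 0)) (mkseq F n) = dt (F n).
Proof.
move=> Fadj; elim: n => [//|n [wF endF]].
rewrite mkseqS -cats1 walkb_cat /walk_end map_cat last_cat /= -Fadj.
by split; rewrite // endF.
Qed.

Lemma closed_walk_nth u s x k : closed_walk dt dh u s -> k < size s ->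
  dh (nth x s k) = dt (nth x s (k.+1 %% size s)).
Proof.
case=> ws ends lt_k.
have [ltSk | eqSk] : k.+1 < size s \/ k.+1 = size s by lia.
  rewrite modn_small //.
  elim: s u k ws {ends lt_k} ltSk => [//|a s IH] u [|k] /= [_ ws] ltSk.
    by case: s ws {IH} ltSk => [//|b s] /= [->].
  exact: IH ws ltSk.
rewrite eqSk modnn; case: s ws ends eqSk {lt_k} => [//|a s] /= [<- _] ends [->].
by rewrite nth_last -ends /walk_end /= last_map.
Qed.

End Walks.

Section Curves.
Variable S : comb_surface.
Implicit Types c d : curve S.

Lemma clen_gt0 c : 0 < clen c.
Proof. by []. Qed.

Lemma carc_mod c n : carc c (n %% clen c) = carc c n.
Proof. by rewrite /carc modn_mod. Qed.

Lemma carcDmod c n x : carc c (n + x %% clen c) = carc c (n + x).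
Proof. by rewrite -carc_mod modnDmr carc_mod. Qed.

Lemma carcD_clen c n : carc c (n + clen c) = carc c n.
Proof. by rewrite -carc_mod modnDr carc_mod. Qed.

Lemma dhead_carc c n : dhead (carc c n) = cvert c n.+1.
Proof.
rewrite /cvert /carc -addn1 -modnDml addn1.
exact: (closed_walk_nth _ (cclosed c) (ltn_pmod n (clen_gt0 c))).
Qed.

Lemma is_cwalk_carc c n m : cvert c (n + m) = cvert c n ->
  is_cwalk (cvert c n, mkseq (fun k => carc c (n + k)) m).
Proof.
move=> closed.
have adj k : dhead (carc c (n + k)) = dtail (carc c (n + k.+1)).
  by rewrite dhead_carc addnS.
have [w e] := walkb_mkseq m adj.
rewrite addn0 in w e.
by split; rewrite //= e.
Qed.

Definition cwalk_at c n : cwalk S := (cvert c n, mkseq (fun k => carc c (n + k)) (clen c)).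

Lemma is_cwalk_at c n : is_cwalk (cwalk_at c n).
Proof. by apply: is_cwalk_carc; rewrite /cvert carcD_clen. Qed.

Lemma cwalk_at0 c : cwalk_at c 0 = cwalk_of c.
Proof.
rewrite /cwalk_at /cwalk_of; congr (_, _).
apply: (@eq_from_nth _ (c0 c)); rewrite size_mkseq // => k lt_k.
by rewrite nth_mkseq // /carc modn_small.
Qed.

Lemma cwalk_at_step c n : hstep_ok (cwalk_at c n) (cwalk_at c n.+1).
Proof.
split; try exact: is_cwalk_at.
rewrite /cwalk_at -[clen c]/(1 + size (crest c)) mkseqD add1n.
rewrite (mkseqS (fun k => carc c (n.+1 + k))) /=.
have -> : carc c (n.+1 + size (crest c)) = carc c (n + 0).
  by rewrite addn0 addSnnS carcD_clen.
have -> : mkseq (fun k => carc c (n + (1 + k))) (size (crest c)) =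
          mkseq (fun k => carc c (n.+1 + k)) (size (crest c)).
  by apply: eq_mkseq => k; rewrite addnA addn1.
rewrite -dhead_carc -[n in dhead (carc c n)]addn0; exact: hs_rot.
Qed.

Lemma homotopic_cwalk_at c n : whomotopic (cwalk_of c) (cwalk_at c n).
Proof.
rewrite -cwalk_at0; elim: n => [|n IH]; first exact: rst_refl.
by apply: rst_trans IH _; apply: rst_step; apply: cwalk_at_step.
Qed.

Lemma primitive_period c n g : primitive c -> 0 < g -> g %| clen c ->
  (forall x, carc c (n + x) = carc c (n + x %% g)) -> clen c = g.
Proof.
move=> prim_c g_gt0 g_dvd per.
set F := fun x => carc c (n + x).
have Fg x : F (x + g) = F x by rewrite /F per modnDr -per.
set a := clen c %/ g.
have len_a : clen c = a * g by rewrite divnK.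
have a_gt0 : 0 < a by move: (clen_gt0 c); rewrite len_a muln_gt0 => /andP[].
have [le_a1 | lt1a] := leqP a 1.
  by rewrite len_a (_ : a = 1) ?mul1n //; lia.
exfalso; apply: prim_c; exists (cvert c n, mkseq F g), a; split => //.
  by apply: is_cwalk_carc; have := Fg 0; rewrite /F add0n addn0 /cvert => ->.
have <- : cwalk_at c n = wpow (cvert c n, mkseq F g) a.
  by rewrite /cwalk_at /wpow {1}len_a mkseq_periodic.
exact: homotopic_cwalk_at.
Qed.

Lemma long_double_path_arcs c d i j l : double_path c d i j l ->
  clen c + clen d - gcdn (clen c) (clen d) <= l ->
  let g := gcdn (clen c) (clen d) in
  (forall x, carc c (i + x) = carc c (i + x %% g)) /\
  (forall x, carc d (j + x) = carc c (i + x)).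
Proof.
move=> [_ _ _ same_arc] long g.
set p := clen c in long g *; set q := clen d in long g *.
have p_gt0 : 0 < p := clen_gt0 c.
have q_gt0 : 0 < q := clen_gt0 d.
have g_dvd_p : g %| p by apply: dvdn_gcdl.
have g_dvd_q : g %| q by apply: dvdn_gcdr.
have g_le_p : g <= p by apply: dvdn_leq.
have g_le_q : g <= q by apply: dvdn_leq.
set F := fun x => carc c (i + x).
set G := fun x => carc d (j + x).
have FG x : x < l -> F x = G x by apply: same_arc.
have Fmod x : F x = F (x %% p) by rewrite /F carcDmod.
have Gmod x : G x = G (x %% q) by rewrite /G carcDmod.
have F_g_on : forall x, x < l -> F x = F (x %% g).
  apply: fine_wilf => // x lt.
    by rewrite Fmod [RHS]Fmod modnDr.
  rewrite FG ?[F (x + q)]FG; try lia.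
  by rewrite Gmod [RHS]Gmod modnDr.
have Fg x : F x = F (x %% g).
  rewrite Fmod F_g_on ?modn_dvdm //.
  by have := ltn_pmod x p_gt0; lia.
split=> // x; rewrite -/(F x) -/(G x) Gmod -FG; last first.
  by have := ltn_pmod x q_gt0; lia.
by rewrite Fg modn_dvdm // -Fg.
Qed.

Lemma long_double_path_homotopic c d i j l :
  primitive c -> primitive d -> double_path c d i j l ->
  clen c + clen d - gcdn (clen c) (clen d) <= l -> freely_homotopic c d.
Proof.
move=> prim_c prim_d dp long.
have [Fg GF] := long_double_path_arcs dp long.
set g := gcdn _ _ in Fg GF.
have g_gt0 : 0 < g by rewrite gcdn_gt0 clen_gt0.
have c_g : clen c = g by apply: (primitive_period (n := i)); rewrite ?dvdn_gcdl.
have d_g : clen d = g.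
  apply: (primitive_period (n := j)); rewrite ?dvdn_gcdr // => x.
  by rewrite !GF -Fg.
apply: rst_trans (homotopic_cwalk_at c i) _.
have -> : cwalk_at c i = cwalk_at d j.
  case: dp => _ _ same_vert _.
  rewrite /cwalk_at c_g d_g; congr (_, _).
    by have := same_vert 0 (leq0n _); rewrite !addn0.
  by apply: eq_mkseq => x; rewrite GF.
by apply: rst_sym; apply: homotopic_cwalk_at.
Qed.

End Curves.

Lemma dpoint_repeat_lcmn (S : comb_surface) (c d : curve S) i j k1 k2 :
  k1 < k2 -> dpoint c d i j k1 = dpoint c d i j k2 ->
  lcmn (clen c) (clen d) <= k2 - k1.
Proof.
move=> lt12 [eq_c eq_d]; apply: dvdn_leq; first by rewrite subn_gt0.
rewrite dvdn_lcm -!eqn_mod_dvd ?(ltnW lt12) //.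
by rewrite -(eqn_modDl i) eq_c eqxx -(eqn_modDl j) eq_d eqxx.
Qed.

Theorem lemma19 (S : comb_surface) (c d : curve S) :
  primitive c -> primitive d -> ~ freely_homotopic c d ->
  forall i j l : nat, double_path c d i j l ->
    (forall k1 k2 : nat, (k1 <= l)%N -> (k2 <= l)%N ->
        dpoint c d i j k1 = dpoint c d i j k2 -> k1 = k2)
    /\ (l < clen c + clen d - 1)%N.
Proof.
move=> prim_c prim_d not_hom i j l dp.
have short : l < clen c + clen d - gcdn (clen c) (clen d).
  rewrite ltnNge; apply/negP => long.
  exact: not_hom (long_double_path_homotopic prim_c prim_d dp long).
have lcm_big := sub_gcdn_leq_lcmn (clen_gt0 c) (clen_gt0 d).
have no_repeat k1 k2 : k1 < k2 -> k2 <= l ->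
    dpoint c d i j k1 <> dpoint c d i j k2.
  by move=> lt12 le2 /(dpoint_repeat_lcmn lt12); lia.
have gcd_gt0 : 0 < gcdn (clen c) (clen d) by rewrite gcdn_gt0 clen_gt0.
split; last by lia.
move=> k1 k2 le1 le2 e.
have [lt12 | lt21 | //] := ltngtP k1 k2.
- by case: (no_repeat _ _ lt12 le2 e).
- by case: (no_repeat _ _ lt21 le1 (esym e)).
Qed.
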